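(* Let $N,L,Q$ be positive integers, let $V=\{v_1,\dots,v_N\}$, and let $t=(t_i(l))_{i\in[N],\,l\in[L]}$ be an arbitrary assignment with $t_i(l)\in[Q]\cup\{\emptyset\}$. Then $t$ is the natural labeling of some community structure $(V,\mathcal{C},\mathcal{S})$ with communities indexed by $[Q]$ that satisfies WPP if and only if $$\forall i,j\in[N],\ \forall l,k\in[L]:\quad \big(t_i(l)=t_j(k)\neq\emptyset\big)\ \Longrightarrow\ \big(t_i(k)=t_j(k)\big).$$
   Context: A community structure on $V$ with $L$ layers is a triple $(V,\mathcal{C},\mathcal{S})$ where $\mathcal{C}=\{C_1,\dots,C_Q\}$ is a family of pairwise distinct subsets $C_q\subseteq V$ (the communities, indexed by $q\in[Q]=\{1,\dots,Q\}$), and $\mathcal{S}=(S_1,\dots,S_L)$ with $S_l\subseteq\mathcal{C}$ the set of communities present in layer $l$. The triple satisfies the well partitioned property (WPP) if for every $l\in[L]$ and all $C_a,C_b\in S_l$, $C_a\cap C_b\neq\emptyset$ implies $C_a=C_b$ (i.e. $a=b$). For a triple satisfying WPP, its natural labeling is $t_i(l)=a$ if $v_i\in C_a$ and $C_a\in S_l$, and $t_i(l)=\emptyset$ if no such $a$ exists (well defined by WPP).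
   Formalization: The communities $C_1,\dots,C_Q$ form an arbitrary indexed family of subsets of V, not necessarily pairwise distinct, and each $S_l$ is a set of indices in [Q]. Each condition added here is assumed in the paper as well or is needed for the statement above to hold. *)

From mathcomp Require Import all_boot.
Set Implicit Arguments. Unset Strict Implicit. Unset Printing Implicit Defensive.

(* A community structure is given by C : 'I_Q -> {set 'I_N} (community C_q)
   and S : 'I_L -> {set 'I_Q} (indices of the communities present in layer l).
   A labeling is t : 'I_N -> 'I_L -> option 'I_Q  (None = the empty label). *)

Definition WPP (N L Q : nat) (C : 'I_Q -> {set 'I_N}) (S : 'I_L -> {set 'I_Q}) : Prop :=
  forall (l : 'I_L) (a b : 'I_Q), a \in S l -> b \in S l ->
    C a :&: C b != set0 -> a = b.

Definition natural_labeling (N L Q : nat) (C : 'I_Q -> {set 'I_N})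
    (S : 'I_L -> {set 'I_Q}) (t : 'I_N -> 'I_L -> option 'I_Q) : Prop :=
  forall (i : 'I_N) (l : 'I_L) (a : 'I_Q),
    t i l = Some a <-> (i \in C a /\ a \in S l).

(* Necessity: if t_i(l) = t_j(k) = a then v_i lies in C_a and C_a is present
   in layer k, so t_i(k) = a.  Sufficiency: let C_a collect the vertices ever
   labeled a and S_l the labels used in layer l.  The condition says exactly
   that a vertex labeled a in some layer gets label a in every layer where a is
   used, which gives both the natural labeling and, since a vertex carries at
   most one label per layer, WPP. *)
From mathcomp Require Import all_boot.

Set Implicit Arguments.
Unset Strict Implicit.
Unset Printing Implicit Defensive.

Section NaturalLabeling.

Variables N L Q : nat.
Variable t : 'I_N -> 'I_L -> option 'I_Q.

Definition consistent_labeling : Prop :=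
  forall (i j : 'I_N) (l k : 'I_L),
    t i l = t j k -> t j k <> None -> t i k = t j k.

Lemma natural_labeling_consistent (C : 'I_Q -> {set 'I_N}) (S : 'I_L -> {set 'I_Q}) :
  natural_labeling C S t -> consistent_labeling.
Proof.
move=> natCS i j l k til_tjk; case tjk: (t j k) til_tjk => [a|] // til _.
have [iCa _] := (natCS i l a).1 til.
have [_ aSk] := (natCS j k a).1 tjk.
exact: (natCS i k a).2.
Qed.

Definition label_community (a : 'I_Q) : {set 'I_N} :=
  [set i | [exists l, t i l == Some a]].

Definition layer_labels (l : 'I_L) : {set 'I_Q} :=
  [set a | [exists i, t i l == Some a]].

Hypothesis tC : consistent_labeling.

Lemma consistent_label_spread (i j : 'I_N) (l l' : 'I_L) (a : 'I_Q) :
  t i l' = Some a -> t j l = Some a -> t i l = Some a.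
Proof. by move=> til' tjl; have := tC (i := i) (j := j) (l := l') (k := l); rewrite til' tjl => ->. Qed.

Lemma label_community_natural : natural_labeling label_community layer_labels t.
Proof.
move=> i l a; rewrite !inE; split.
- by move=> til; split; apply/existsP; [exists l | exists i]; apply/eqP.
- by case=> /existsP [l' /eqP til'] /existsP [j /eqP tjl]; exact: consistent_label_spread til' tjl.
Qed.

Lemma label_community_WPP : WPP label_community layer_labels.
Proof.
move=> l a b; rewrite !inE => /existsP [j /eqP tjl] /existsP [j' /eqP tj'l].
case/set0Pn=> i; rewrite !inE => /andP [/existsP [l1 /eqP til1] /existsP [l2 /eqP til2]].
have := consistent_label_spread til1 tjl.
by rewrite (consistent_label_spread til2 tj'l) => -[].
Qed.

End NaturalLabeling.

Theorem theorem1 (N L Q : nat) (hN : 0 < N) (hL : 0 < L) (hQ : 0 < Q)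
    (t : 'I_N -> 'I_L -> option 'I_Q) :
  (exists (C : 'I_Q -> {set 'I_N}) (S : 'I_L -> {set 'I_Q}),
      WPP C S /\ natural_labeling C S t)
  <->
  (forall (i j : 'I_N) (l k : 'I_L),
      t i l = t j k -> t j k <> None -> t i k = t j k).
Proof.
split.
- by move=> [C [S [_ natCS]]]; exact: natural_labeling_consistent natCS.
- move=> tC; exists (label_community t), (layer_labels t).
  by split; [exact: label_community_WPP | exact: label_community_natural].
Qed.
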